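(* Let $m\ge 38$ and let $G$ be a graph with maximum spectral radius among all $H(4,3)$-free graphs with $m$ edges and no isolated vertices. Then $G$ is connected.
   Context: All graphs are simple and undirected; the spectral radius $\rho(G)$ is the largest adjacency eigenvalue. $H(4,3)$ is the graph formed by a cycle of length $4$ and a triangle sharing exactly one common vertex. *)

From HB Require Import structures.
From mathcomp Require Import all_boot all_order all_algebra.
From mathcomp Require Import classical_sets reals Rstruct.

Set Implicit Arguments. Unset Strict Implicit. Unset Printing Implicit Defensive.
Import Order.TTheory GRing.Theory Num.Theory.

Definition simple_graph (n : nat) (e : rel 'I_n) : Prop :=
  symmetric e /\ irreflexive e.

(* Edge set as unordered pairs {i,j} encoded by i < j. *)
Definition edge_set (n : nat) (e : rel 'I_n) : {set 'I_n * 'I_n} :=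
  [set p : 'I_n * 'I_n | (p.1 < p.2)%N && e p.1 p.2].

Definition num_edges (n : nat) (e : rel 'I_n) : nat := #|edge_set e|.

Definition no_isolated (n : nat) (e : rel 'I_n) : Prop :=
  forall v : 'I_n, exists u : 'I_n, e v u.

Definition connected_graph (n : nat) (e : rel 'I_n) : Prop :=
  forall u v : 'I_n, connect e u v.

(* H(4,3): 4-cycle 0-1-2-3-0 and triangle 0-4-5-0 sharing vertex 0. *)
Definition H43_edge (a b : 'I_6) : bool :=
  let x := nat_of_ord a in let y := nat_of_ord b in
  [|| (x == 0) && (y == 1), (x == 1) && (y == 2), (x == 2) && (y == 3),
      (x == 3) && (y == 0), (x == 0) && (y == 4), (x == 4) && (y == 5)
    | (x == 5) && (y == 0)]%N.

(* G contains H(4,3) as a (not necessarily induced) subgraph. *)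
Definition contains_H43 (n : nat) (e : rel 'I_n) : Prop :=
  exists f : 'I_6 -> 'I_n, injective f /\ forall a b, H43_edge a b -> e (f a) (f b).

Definition H43_free (n : nat) (e : rel 'I_n) : Prop := ~ contains_H43 e.

Definition adj_mx (n : nat) (e : rel 'I_n) : 'M[Rdefinitions.R]_n :=
  \matrix_(i, j) ((e i j)%:R)%R.

Definition spectral_radius (n : nat) (e : rel 'I_n) : Rdefinitions.R :=
  sup [set a : Rdefinitions.R | eigenvalue (adj_mx e) a]%classic.

From HB Require Import structures.
From mathcomp Require Import all_boot all_order all_algebra.
From mathcomp Require Import classical_sets reals Rstruct.
From mathcomp Require Import complex zify ring lra.

Set Implicit Arguments. Unset Strict Implicit. Unset Printing Implicit Defensive.
Import Order.TTheory GRing.Theory Num.Theory.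
Local Open Scope ring_scope.

(* Suppose the extremal graph G is disconnected. Take an eigenvector v for
   rho(G), a vertex u with v u <> 0, its component C, and an edge yz outside C.
   Restricting v to C gives a vector x with Rayleigh quotient rho(G); putting a
   small weight s at y and moving the edge yz to uy adds 2 (v u) s to x^T A x
   but only s^2 to x^T x, so the new graph has larger spectral radius.  It has
   the same number of edges, and is still H(4,3)-free because the new edge is a
   bridge while every edge of H(4,3) lies on a cycle; if z became isolated it is
   deleted, which changes nothing since x z = 0. *)

Section RealSymmetricMatrix.
Local Open Scope sesquilinear_scope.
Local Open Scope complex_scope.

Variables (R : rcfType) (n : nat) (A : 'M[R]_n.+1).
Hypothesis A_sym : A^T = A.

Let Ac := A ^ (@real_complex R).
Let P := spectralmx Ac.
Let sp := spectral_diag Ac.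

Let Ac_spectral : Ac = invmx P *m diag_mx sp *m P.
Proof.
apply/orthomx_spectralP/symmetric_normalmx.
  by apply/is_hermitianmxP; rewrite expr0 scale1r map_mx_id // map_trmx A_sym.
by apply/mxOverP => i j; rewrite mxE complex_real.
Qed.

Let sp_real i : sp 0 i = (complex.Re (sp 0 i))%:C.
Proof.
rewrite RRe_real //; apply: (mxOverP _); apply: hermitian_spectral_diag_real.
apply: realsym_hermsym; last by apply/mxOverP => ? ?; rewrite mxE complex_real.
by apply/is_hermitianmxP; rewrite expr0 scale1r map_mx_id // map_trmx A_sym.
Qed.

Let k := Order.arg_max ord0 xpredT (fun i => complex.Re (sp 0 i)).

Let sp_le_k i : complex.Re (sp 0 i) <= complex.Re (sp 0 k).
Proof. by rewrite /k; case: arg_maxP => //= j _; apply. Qed.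

Let eigenvalue_max_spectral_diag : eigenvalue A (complex.Re (sp 0 k)).
Proof.
have Punit : P \in unitmx := spectral_unit Ac.
rewrite eigenvalue_root_char -(fmorph_root (@real_complex R)) map_char_poly.
rewrite -eigenvalue_root_char; apply/eigenvalueP; exists (row k P).
  rewrite -/Ac Ac_spectral !mulmxA -row_mul mulmxV // -!row_mul mul1mx row_mul.
  have -> : row k (diag_mx sp) = sp 0 k *: row k 1%:M.
    by apply/rowP => j; rewrite !mxE; case: eqP => [->|]; rewrite ?mulr1 ?mulr0.
  by rewrite -scalemxAl -row_mul mul1mx sp_real.
apply/negP => /eqP Pk0.
have : row k P *m invmx P = row k 1%:M by rewrite -row_mul mulmxV.
rewrite Pk0 mul0mx => /rowP /(_ k); rewrite !mxE eqxx => /eqP.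
by rewrite eq_sym oner_eq0.
Qed.

Let rayleigh_le_max_spectral_diag (x : 'rV[R]_n.+1) :
  (x *m A *m x^T) 0 0 <= complex.Re (sp 0 k) * (x *m x^T) 0 0.
Proof.
pose z := x ^ (@real_complex R).
have zt : z^t* = x^T ^ (@real_complex R).
  by apply/matrixP => i j; rewrite !mxE conj_Creal // complex_real.
have iP : invmx P = P^t* := invmx_unitary (spectral_unitarymx Ac).
pose w := z *m P^t*.
have wt : w^t* = P *m z^t* by rewrite /w trmx_mul map_mxM trmxCK.
have zAz : z *m Ac *m z^t* = w *m diag_mx sp *m w^t*.
  by rewrite Ac_spectral iP wt !mulmxA.
have zz : z *m z^t* = w *m w^t*.
  by rewrite wt /w -iP !mulmxA -[z *m _ *m P]mulmxA mulVmx ?spectral_unit // mulmx1.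
have : (z *m Ac *m z^t*) 0 0 <= (complex.Re (sp 0 k))%:C * (z *m z^t*) 0 0.
  rewrite zAz zz mul_mx_diag !mxE mulr_sumr; apply: ler_sum => i _.
  rewrite !mxE mulrAC [X in _ <= X]mulrC.
  by apply: ler_wpM2l; [rewrite mul_conjC_ge0 | rewrite (sp_real i) lecR sp_le_k].
by rewrite zt -!map_mxM !mxE -rmorphM lecR.
Qed.

Lemma symmetric_mx_max_eigenvalue : exists a, eigenvalue A a /\
  forall x : 'rV[R]_n.+1, (x *m A *m x^T) 0 0 <= a * (x *m x^T) 0 0.
Proof.
by exists (complex.Re (sp 0 k)); split;
  [exact: eigenvalue_max_spectral_diag | exact: rayleigh_le_max_spectral_diag].
Qed.

End RealSymmetricMatrix.

Local Notation RR := Rdefinitions.R.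

Section QuadraticForm.
Variable n : nat.
Implicit Types (w : 'I_n -> 'I_n -> RR) (x : 'I_n -> RR) (e : rel 'I_n).

Definition qform w x : RR := \sum_j \sum_i x i * w i j * x j.
Definition adj_qform e x : RR := qform (fun i j => (e i j)%:R) x.
Definition sqnorm x : RR := \sum_i x i ^+ 2.

Lemma eq_qform w1 w2 x : (forall i j, w1 i j = w2 i j) -> qform w1 x = qform w2 x.
Proof.
by move=> w12; apply: eq_bigr => j _; apply: eq_bigr => i _; rewrite w12.
Qed.

Lemma qformD w1 w2 x : qform (fun i j => w1 i j + w2 i j) x = qform w1 x + qform w2 x.
Proof.
rewrite /qform -big_split; apply: eq_bigr => j _; rewrite -big_split.
by apply: eq_bigr => i _; rewrite mulrDr mulrDl.
Qed.

Lemma qformN w x : qform (fun i j => - w i j) x = - qform w x.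
Proof.
rewrite /qform -sumrN; apply: eq_bigr => j _; rewrite -sumrN.
by apply: eq_bigr => i _; rewrite mulrN mulNr.
Qed.

Lemma qform_delta (a b : 'I_n) x :
  qform (fun i j => ((i == a) && (j == b))%:R) x = x a * x b.
Proof.
rewrite /qform (bigD1 b) //= [X in _ + X]big1 => [|j jb]; last first.
  by apply: big1 => i _; rewrite (negbTE jb) andbF mulr0 mul0r.
rewrite addr0 (bigD1 a) //= [X in _ + X]big1 => [|i ia]; last first.
  by rewrite (negbTE ia) mulr0 mul0r.
by rewrite !eqxx mulr1 addr0.
Qed.

Lemma eq_adj_qform e x1 x2 : (forall i j, e i j -> x1 i * x1 j = x2 i * x2 j) ->
  adj_qform e x1 = adj_qform e x2.
Proof.
move=> x12; apply: eq_bigr => j _; apply: eq_bigr => i _.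
rewrite mulrAC [RHS]mulrAC.
by case: (boolP (e i j)) => [/x12 ->|_]; rewrite ?mulr0.
Qed.

Lemma adj_qform_eigen e v b :
  (forall j, \sum_i v i * (e i j)%:R = b * v j) -> adj_qform e v = b * sqnorm v.
Proof.
move=> ev; rewrite /adj_qform /qform /sqnorm mulr_sumr; apply: eq_bigr => j _.
by rewrite -mulr_suml ev expr2 mulrA.
Qed.

Lemma sqnorm_gt0 x i : x i != 0 -> 0 < sqnorm x.
Proof.
move=> xi; rewrite /sqnorm (bigD1 i) //=; apply: ltr_wpDr; last first.
  by rewrite exprn_even_gt0.
by apply: sumr_ge0 => k _; rewrite sqr_ge0.
Qed.

End QuadraticForm.

Lemma adj_mx_tr n (e : rel 'I_n) : symmetric e -> (adj_mx e)^T = adj_mx e.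
Proof. by move=> se; apply/matrixP => i j; rewrite !mxE se. Qed.

Lemma eigenvalue_adj_mxP n (e : rel 'I_n) b : eigenvalue (adj_mx e) b ->
  exists2 v : 'I_n -> RR, exists i, v i != 0 &
    forall j, \sum_i v i * (e i j)%:R = b * v j.
Proof.
case/eigenvalueP => v vA v0; exists (fun i => v 0 i).
  apply/existsP; apply: contraNT v0 => /existsPn v0.
  by apply/eqP/rowP => i; rewrite mxE; apply/eqP; have := v0 i; rewrite negbK.
by move=> j; have /rowP /(_ j) := vA; rewrite !mxE => <-; apply: eq_bigr => i _; rewrite mxE.
Qed.

Lemma spectral_radius_max_eigenvalue n (e : rel 'I_n.+1) : symmetric e ->
  eigenvalue (adj_mx e) (spectral_radius e) /\
  forall x, adj_qform e x <= spectral_radius e * sqnorm x.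
Proof.
move=> se; have [a [ea rayleigh]] := symmetric_mx_max_eigenvalue (adj_mx_tr se).
have {}rayleigh x : adj_qform e x <= a * sqnorm x.
  have := rayleigh (\row_i x i); congr (_ <= _ * _); rewrite mxE.
    by apply: eq_bigr => j _; rewrite !mxE mulr_suml; apply: eq_bigr => i _; rewrite !mxE.
  by apply: eq_bigr => j _; rewrite !mxE expr2.
have le_a b : eigenvalue (adj_mx e) b -> b <= a.
  case/eigenvalue_adj_mxP => v [i vi] ev.
  by have := rayleigh v; rewrite (adj_qform_eigen ev) ler_pM2r // (sqnorm_gt0 vi).
suff -> : spectral_radius e = a by [].
apply/eqP; rewrite eq_le; apply/andP; split.
  by apply: ge_sup; [exists a | exact: le_a].
by apply: ub_le_sup => //; exists a; exact: le_a.
Qed.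

Lemma adj_qform_le_spectral_radius n (e : rel 'I_n) x : symmetric e ->
  adj_qform e x <= spectral_radius e * sqnorm x.
Proof.
case: n e x => [|n] e x se; last exact: (spectral_radius_max_eigenvalue se).2.
by rewrite /adj_qform /qform /sqnorm !big_ord0 mulr0.
Qed.

Lemma spectral_radius_eigenvector n (e : rel 'I_n.+1) : symmetric e ->
  exists2 v : 'I_n.+1 -> RR, exists i, v i != 0 &
    forall j, \sum_i v i * (e i j)%:R = spectral_radius e * v j.
Proof. by move=> se; apply: eigenvalue_adj_mxP; case: (spectral_radius_max_eigenvalue se). Qed.

Definition upair_eq (T : eqType) (i j a b : T) : bool :=
  ((i == a) && (j == b)) || ((i == b) && (j == a)).

Lemma upair_eqC (T : eqType) (i j a b : T) : upair_eq j i a b = upair_eq i j a b.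
Proof. by rewrite /upair_eq orbC !(andbC (j == _)). Qed.

Lemma upair_eq_trans (T : eqType) (i j a b u y : T) :
  upair_eq i j u y -> upair_eq a b u y -> upair_eq i j a b.
Proof. by do 2![case/orP=> /andP[/eqP-> /eqP->]]; rewrite /upair_eq !eqxx ?orbT. Qed.

Lemma upair_eq_inj (T T' : eqType) (f : T -> T') (i j a b : T) : injective f ->
  upair_eq (f i) (f j) (f a) (f b) = upair_eq i j a b.
Proof. by move=> f_inj; rewrite /upair_eq !(inj_eq f_inj). Qed.

Lemma upair_eq_rel (T : eqType) (e : rel T) (i j a b : T) : symmetric e ->
  upair_eq i j a b -> e i j = e a b.
Proof. by move=> se; case/orP=> /andP[/eqP-> /eqP->]. Qed.

Lemma upair_eq_nat (R : pzSemiRingType) (T : eqType) (i j a b : T) : a != b ->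
  (upair_eq i j a b)%:R = ((i == a) && (j == b))%:R + ((i == b) && (j == a))%:R :> R.
Proof.
move=> ab; have : ~~ (((i == a) && (j == b)) && ((i == b) && (j == a))).
  by apply: contra ab => /andP[/andP[/eqP<- _] /andP[/eqP-> _]].
rewrite /upair_eq; case: ((i == a) && (j == b)); case: ((i == b) && (j == a)) => //= _.
all: by rewrite ?addr0 ?add0r.
Qed.

Definition edge_of n (a b : 'I_n) : 'I_n * 'I_n :=
  if (a < b)%N then (a, b) else (b, a).

Lemma edge_of_lt n (a b : 'I_n) : a != b -> ((edge_of a b).1 < (edge_of a b).2)%N.
Proof.
rewrite /edge_of => ab; case: (ltnP a b) => //= ba.
by rewrite ltn_neqAle ba andbT; apply: contra ab => /eqP/val_inj->.
Qed.

Lemma eq_edge_of n (i j a b : 'I_n) : (i < j)%N ->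
  ((i, j) == edge_of a b) = upair_eq i j a b.
Proof.
move=> ij; have rev (p q : 'I_n) : (p <= q)%N -> (i == q) && (j == p) = false.
  by move=> pq; apply/negbTE/andP => -[/eqP iq /eqP jp]; move: ij; rewrite iq jp ltnNge pq.
rewrite /edge_of /upair_eq; case: (ltnP a b) => [/ltnW/rev|/rev] rev_ab.
  by rewrite xpair_eqE rev_ab orbF.
by rewrite xpair_eqE rev_ab.
Qed.

Lemma edge_of_in n (e : rel 'I_n) (a b : 'I_n) : symmetric e -> a != b ->
  (edge_of a b \in edge_set e) = e a b.
Proof. by move=> se ab; rewrite inE edge_of_lt //= /edge_of; case: ifP. Qed.

Definition rotate_edge n (e : rel 'I_n) (u y z : 'I_n) : rel 'I_n :=
  fun i j => if upair_eq i j y z then false else upair_eq i j u y || e i j.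

Section RotateEdge.
Variables (n : nat) (e : rel 'I_n) (u y z : 'I_n).
Hypotheses (e_sym : symmetric e) (e_irr : irreflexive e) (e_yz : e y z).
Hypotheses (e_uy : ~~ e u y) (u_y : u != y) (u_z : u != z).

Let e' := rotate_edge e u y z.

Lemma rotate_edge_simple : simple_graph e'.
Proof.
split=> [i j|i]; first by rewrite /e' /rotate_edge e_sym !(upair_eqC j).
rewrite /e' /rotate_edge e_irr orbF; case: ifP => // _.
by apply/negbTE; apply: contra u_y => /orP[] /andP[/eqP<- /eqP<-].
Qed.

Lemma rotate_edge_sub i j : e' i j -> e i j || upair_eq i j u y.
Proof. by rewrite /e' /rotate_edge; case: ifP => // _; rewrite orbC. Qed.

Let upair_yz_uy i j : upair_eq i j y z -> upair_eq i j u y = false.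
Proof.
have [y_u z_u] : (y == u) = false /\ (z == u) = false.
  by rewrite !(eq_sym _ u) (negbTE u_y) (negbTE u_z).
by case/orP=> /andP[/eqP-> /eqP->]; rewrite /upair_eq eqxx y_u z_u ?andbF.
Qed.

Lemma rotate_edge_nat i j : (e' i j)%:R =
  (e i j)%:R - (upair_eq i j y z)%:R + (upair_eq i j u y)%:R :> RR.
Proof.
rewrite /e' /rotate_edge; case: ifP => [yz|_].
  by rewrite upair_yz_uy // (upair_eq_rel e_sym yz) e_yz subrr add0r.
case: (boolP (upair_eq i j u y)) => [uy|_] /=; last by rewrite subr0 addr0.
by rewrite (upair_eq_rel e_sym uy) (negbTE e_uy) subr0 add0r.
Qed.

Let y_z : y != z. Proof. by apply: contraTneq e_yz => ->; rewrite e_irr. Qed.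

Lemma adj_qform_rotate_edge x :
  adj_qform e' x = adj_qform e x - 2 * x y * x z + 2 * x u * x y.
Proof.
rewrite /adj_qform (eq_qform _ rotate_edge_nat).
under eq_qform do rewrite (upair_eq_nat _ _ _ y_z) (upair_eq_nat _ _ _ u_y).
rewrite qformD (qformD (fun i j => (e i j)%:R)) qformN !qformD !qform_delta.
ring.
Qed.

Lemma edge_set_rotate_edge :
  edge_set e' = edge_of u y |: (edge_set e :\ edge_of y z).
Proof.
apply/setP => -[i j]; rewrite !inE /=.
have [ij|ji] := ltnP i j; last first.
  rewrite /= andbF orbF; apply/esym/negbTE.
  have := edge_of_lt u_y; case: (edge_of u y) => a b /= ab.
  by apply: contraTN ji => /eqP[-> ->]; rewrite -ltnNge.
rewrite !eq_edge_of //= /e' /rotate_edge.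
by case: ifP => [/upair_yz_uy ->|].
Qed.

Lemma num_edges_rotate_edge : num_edges e' = num_edges e.
Proof.
rewrite /num_edges edge_set_rotate_edge cardsU1 (cardsD1 (edge_of y z) (edge_set e)).
by rewrite in_setD1 !edge_of_in // e_yz (negbTE e_uy) andbF.
Qed.

Lemma rotate_edge_no_isolated : no_isolated e ->
  forall v, v != z -> exists w, e' v w.
Proof.
move=> e_noiso v v_z; rewrite /e' /rotate_edge /upair_eq.
have [->|v_u] := eqVneq v u.
  by exists y; rewrite (negbTE u_y) (negbTE u_z) !eqxx /=.
have [->|v_y] := eqVneq v y.
  by exists u; rewrite (negbTE y_z) !eqxx /= (negbTE u_z).
have [w vw] := e_noiso v.
by exists w; rewrite (negbTE v_z) vw /= ?orbT.
Qed.

Lemma rotate_edge_neighbour_z w : w != y -> e z w -> e' z w.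
Proof.
move=> w_y zw; rewrite /e' /rotate_edge /upair_eq eq_sym (negbTE y_z).
by rewrite (negbTE w_y) andbF zw orbT.
Qed.

Lemma rotate_edge_isolated_z : (forall w, e z w -> w = y) -> forall w, ~~ e' z w.
Proof.
move=> z_only w; rewrite /e' /rotate_edge /upair_eq eq_sym (negbTE y_z) eqxx /=.
case: eqP => //= w_y; rewrite eq_sym (negbTE u_z) /=.
by apply/negP => /z_only.
Qed.

End RotateEdge.

Definition bridgeless (K : finType) (h : rel K) : Prop :=
  forall a b, h a b -> connect (fun i j => h i j && ~~ upair_eq i j a b) b a.

Lemma bridgeless_embedding (K : finType) (h : rel K) n (e e' : rel 'I_n)
    (c : pred 'I_n) (u y : 'I_n) (f : K -> 'I_n) :
  bridgeless h -> (forall i j, e i j -> c i = c j) -> c u -> ~~ c y ->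
  (forall i j, e' i j -> e i j || upair_eq i j u y) ->
  injective f -> (forall a b, h a b -> e' (f a) (f b)) ->
  forall a b, h a b -> e (f a) (f b).
Proof.
move=> h_br cE cu cy e'E f_inj fE a b hab.
have /orP[//|ab_uy] := e'E _ _ (fE _ _ hab); exfalso.
have c_ab : c (f a) != c (f b).
  by case/orP: ab_uy => /andP[/eqP-> /eqP->]; rewrite cu (negbTE cy).
have c_closed : closed (fun i j => h i j && ~~ upair_eq i j a b) [pred k | c (f k)].
  move=> i j /andP[hij]; have /orP[/cE //|ij_uy] := e'E _ _ (fE _ _ hij).
  by rewrite -(upair_eq_inj _ _ _ _ f_inj) (upair_eq_trans ij_uy ab_uy).
have := closed_connect c_closed (h_br _ _ hab); rewrite !inE => c_ba.
by rewrite c_ba eqxx in c_ab.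
Qed.

Lemma H43_bridgeless : bridgeless H43_edge.
Proof.
(* Each edge is closed up by the rest of its 4-cycle or triangle. *)
move=> [[|[|[|[|[|[|//]]]]]] ha] [[|[|[|[|[|[|//]]]]]] hb] //= _; apply/connectP.
- by exists [:: inZp 2; inZp 3; inZp 0]; last exact/val_inj.
- by exists [:: inZp 5; inZp 0]; last exact/val_inj.
- by exists [:: inZp 3; inZp 0; inZp 1]; last exact/val_inj.
- by exists [:: inZp 0; inZp 1; inZp 2]; last exact/val_inj.
- by exists [:: inZp 1; inZp 2; inZp 3]; last exact/val_inj.
- by exists [:: inZp 0; inZp 4]; last exact/val_inj.
- by exists [:: inZp 4; inZp 5]; last exact/val_inj.
Qed.

Lemma H43_free_rotate_edge n (e : rel 'I_n) (c : pred 'I_n) u y z :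
  H43_free e -> (forall i j, e i j -> c i = c j) -> c u -> ~~ c y ->
  H43_free (rotate_edge e u y z).
Proof.
move=> e_free cE cu cy [f [f_inj fE]]; apply: e_free; exists f; split=> //.
exact: bridgeless_embedding H43_bridgeless cE cu cy (@rotate_edge_sub _ e u y z) f_inj fE.
Qed.

Definition del_vertex n (e : rel 'I_n.+1) (z : 'I_n.+1) : rel 'I_n :=
  fun i j => e (lift z i) (lift z j).

Lemma ltn_lift n (z : 'I_n.+1) (i j : 'I_n) : (lift z i < lift z j)%N = (i < j)%N.
Proof. by rewrite /= /bump; case: (leqP z i); case: (leqP z j) => /=; lia. Qed.

Section DeleteVertex.
Variables (n : nat) (e : rel 'I_n.+1) (z : 'I_n.+1).

Lemma del_vertex_simple : simple_graph e -> simple_graph (del_vertex e z).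
Proof. by case=> e_sym e_irr; split=> [i j|i]; [apply: e_sym | apply: e_irr]. Qed.

Lemma H43_free_del_vertex : H43_free e -> H43_free (del_vertex e z).
Proof.
move=> e_free [f [f_inj fE]]; apply: e_free; exists (lift z \o f); split=> //.
by move=> a b /lift_inj /f_inj.
Qed.

Hypotheses (e_sym : symmetric e) (z_isolated : forall j, ~~ e z j).

Let lift_of_edge v w : e v w -> exists w', w = lift z w'.
Proof.
move=> vw; have z_w : z != w.
  by apply: contraTneq vw => <-; rewrite e_sym (negbTE (z_isolated _)).
by have [w' -> _] := unlift_some z_w; exists w'.
Qed.

Lemma del_vertex_no_isolated : (forall v, v != z -> exists w, e v w) ->
  no_isolated (del_vertex e z).
Proof.
move=> e_noiso v; have [w vw] := e_noiso (lift z v) (negbT (lift_eqF z v)).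
by have [w' wE] := lift_of_edge vw; exists w'; rewrite /del_vertex -wE.
Qed.

Lemma num_edges_del_vertex : num_edges (del_vertex e z) = num_edges e.
Proof.
pose lift2 (p : 'I_n * 'I_n) := (lift z p.1, lift z p.2).
have lift2_inj : injective lift2.
  move=> [a b] [c d] /eqP; rewrite xpair_eqE !(inj_eq (@lift_inj _ z)) /=.
  by case/andP=> /eqP-> /eqP->.
rewrite /num_edges -(card_imset _ lift2_inj).
congr #|pred_of_set _|; apply/setP => -[i j]; rewrite [RHS]inE /=.
apply/imsetP/andP => [[[a b]]|[ij eij]].
  by rewrite inE /= => /andP[ab eab] [-> ->]; rewrite ltn_lift.
have z_i : z != i by apply: contraTneq eij => <-; rewrite (negbTE (z_isolated _)).
have [a ia _] := unlift_some z_i; have [b jb] := lift_of_edge eij; subst i j.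
by exists (a, b); rewrite // inE /= -(ltn_lift z) ij.
Qed.

End DeleteVertex.

Lemma adj_qform_del_vertex n (e : rel 'I_n.+1) z (x : 'I_n.+1 -> RR) : x z = 0 ->
  adj_qform (del_vertex e z) (x \o lift z) = adj_qform e x.
Proof.
move=> xz; rewrite /adj_qform /qform (bigD1_ord z) //= [X in X + _]big1 ?add0r; last first.
  by move=> i _; rewrite xz mulr0.
by apply: eq_bigr => j _; rewrite (bigD1_ord z) //= xz !mul0r add0r.
Qed.

Lemma sqnorm_del_vertex n z (x : 'I_n.+1 -> RR) : x z = 0 ->
  sqnorm (x \o lift z) = sqnorm x.
Proof. by move=> xz; rewrite /sqnorm (bigD1_ord z) //= xz expr0n add0r. Qed.

Lemma restrict_eigenvector n (e : rel 'I_n) (c : pred 'I_n) (v : 'I_n -> RR) b :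
  (forall i j, e i j -> c i = c j) ->
  (forall j, \sum_i v i * (e i j)%:R = b * v j) ->
  forall j, \sum_i (if c i then v i else 0) * (e i j)%:R = b * (if c j then v j else 0).
Proof.
move=> cE ev j; case: (boolP (c j)) => cj.
  rewrite -ev; apply: eq_bigr => i _; case: (boolP (e i j)) => [/cE->|_]; last by rewrite !mulr0.
  by rewrite cj.
rewrite mulr0; apply: big1 => i _; case: (boolP (e i j)) => [/cE->|_]; last by rewrite mulr0.
by rewrite (negbTE cj) mul0r.
Qed.

Lemma rayleigh_gain (R : realFieldType) (a v N s : R) : v != 0 ->
  s = v / (`|a| + 1) -> a * (N + s ^+ 2) < a * N + 2 * v * s.
Proof.
move=> v0 sE; have t_gt0 : 0 < `|a| + 1 by rewrite ltr_wpDl.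
have s0 : s != 0 by rewrite sE mulf_neq0 // invr_eq0 gt_eqF.
rewrite -subr_gt0 (_ : _ - _ = s ^+ 2 * (2 * (`|a| + 1) - a)); last first.
  by rewrite sE; field; rewrite gt_eqF.
rewrite mulr_gt0 ?exprn_even_gt0 //.
by have := ler_norm a; have := normr_ge0 a; lra.
Qed.

Lemma across_components n (e : rel 'I_n) (c : pred 'I_n) u y z :
  irreflexive e -> (forall i j, e i j -> c i = c j) -> c u -> ~~ c y -> e y z ->
  [/\ ~~ c z, u != y, u != z, y != z & ~~ e u y].
Proof.
move=> e_irr cE cu cy e_yz; have cz : ~~ c z by rewrite -(cE _ _ e_yz).
split=> //.
- by apply: contraNneq cy => <-.
- by apply: contraNneq cz => <-.
- by apply: contraTneq e_yz => ->; rewrite e_irr.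
- by apply: contra cy => /cE <-.
Qed.

Lemma rotate_edge_test_vector n (e : rel 'I_n) (c : pred 'I_n) (v : 'I_n -> RR) a u y z :
  simple_graph e -> (forall i j, e i j -> c i = c j) -> c u -> ~~ c y -> e y z ->
  v u != 0 -> (forall j, \sum_i v i * (e i j)%:R = a * v j) ->
  exists x, [/\ x z = 0, 0 < sqnorm x & a * sqnorm x < adj_qform (rotate_edge e u y z) x].
Proof.
move=> [e_sym e_irr] cE cu cy e_yz vu ev.
have [cz u_y u_z y_z e_uy] := across_components e_irr cE cu cy e_yz.
pose s := v u / (`|a| + 1).
pose xC i := if c i then v i else 0.
pose x i := if c i then v i else if i == y then s else 0.
have [xu xy xz] : [/\ x u = v u, x y = s & x z = 0].
  by rewrite /x cu (negbTE cy) (negbTE cz) eqxx eq_sym (negbTE y_z).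
have s0 : s != 0 by rewrite mulf_neq0 // invr_eq0 gt_eqF // ltr_wpDl.
have Qx : adj_qform e x = a * sqnorm xC.
  rewrite -(adj_qform_eigen (restrict_eigenvector cE ev)).
  apply: eq_adj_qform => i j eij; rewrite /x /xC -(cE _ _ eij).
  case: (c i) => //; rewrite !mul0r.
  case: (i =P y) => [iy|_]; last by rewrite mul0r.
  by rewrite (_ : j == y = false) ?mulr0 //; apply: contraTF eij => /eqP->; rewrite iy e_irr.
have Nx : sqnorm x = sqnorm xC + s ^+ 2.
  have xCy : xC y ^+ 2 = 0 by rewrite /xC (negbTE cy) expr2 mulr0.
  rewrite /sqnorm [LHS](bigD1 y) // [X in _ = X + _](bigD1 y) //= xy xCy add0r addrC.
  by congr (_ + _); apply: eq_bigr => i /negbTE iy; rewrite /x /xC iy.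
exists x; split=> //; first by rewrite (sqnorm_gt0 (_ : x y != 0)) // xy.
rewrite (adj_qform_rotate_edge e_sym e_irr e_yz e_uy u_y u_z) Qx Nx xz xu xy.
by rewrite mulr0 subr0; apply: rayleigh_gain.
Qed.

Definition admissible m n (e : rel 'I_n) : Prop :=
  [/\ simple_graph e, num_edges e = m, no_isolated e & H43_free e].

Lemma rotate_edge_competitor m n (e : rel 'I_n.+1) (c : pred 'I_n.+1) u y z
    (x : 'I_n.+1 -> RR) :
  admissible m e -> (forall i j, e i j -> c i = c j) -> c u -> ~~ c y ->
  e y z -> x z = 0 ->
  exists n' (e' : rel 'I_n'), admissible m e' /\
    adj_qform (rotate_edge e u y z) x <= spectral_radius e' * sqnorm x.
Proof.
case=> -[e_sym e_irr] e_m e_noiso e_free cE cu cy e_yz xz.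
have [_ u_y u_z _ e_uy] := across_components e_irr cE cu cy e_yz.
set e' := rotate_edge e u y z.
have e'_simple : simple_graph e' := rotate_edge_simple z e_sym e_irr u_y.
have e'_m : num_edges e' = m by rewrite num_edges_rotate_edge.
have e'_free : H43_free e' := H43_free_rotate_edge e_free cE cu cy.
have e'_noiso := rotate_edge_no_isolated e_irr e_yz u_y u_z e_noiso.
case: (pickP (fun w => (w != y) && e z w)) => [w /andP[w_y zw] | z_only].
  exists n.+1, e'; split; last by apply: adj_qform_le_spectral_radius; case: e'_simple.
  split=> // v; have [->|] := eqVneq v z; last exact: e'_noiso.
  by exists w; apply: rotate_edge_neighbour_z.
have z_iso : forall w, ~~ e' z w.
  apply: rotate_edge_isolated_z => // w zw; apply/eqP.
  by have := z_only w; rewrite /= zw andbT => /negbFE.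
have e'_sym : symmetric e' by case: e'_simple.
exists n, (del_vertex e' z); split; first split.
- exact: del_vertex_simple.
- by rewrite num_edges_del_vertex.
- exact: del_vertex_no_isolated.
- exact: H43_free_del_vertex.
rewrite -(adj_qform_del_vertex e' xz) -(sqnorm_del_vertex xz).
by apply: adj_qform_le_spectral_radius; case: (del_vertex_simple z e'_simple).
Qed.

Lemma disconnected_not_extremal m n (e : rel 'I_n.+1) :
  admissible m e -> ~ connected_graph e ->
  exists n' (e' : rel 'I_n'), admissible m e' /\ spectral_radius e < spectral_radius e'.
Proof.
move=> e_adm e_disc; have [e_simple _ e_noiso _] := e_adm; have [e_sym _] := e_simple.
have e_csym := sym_connect_sym e_sym.
have [v [u vu] ev] := spectral_radius_eigenvector e_sym.
pose c := connect e u.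
have cE i j : e i j -> c i = c j by move/connect1/(same_connect_r e_csym)/(_ u).
have cu : c u := connect0 e u.
have [y cy] : exists y, ~~ c y.
  case: (pickP (predC c)) => [y cy|c_all]; first by exists y.
  case: e_disc => p q; apply: connect_trans _ (negbFE (c_all q)).
  by rewrite e_csym; apply: negbFE (c_all p).
have [z e_yz] := e_noiso y.
have [x [xz x_gt0 x_gain]] := rotate_edge_test_vector e_simple cE cu cy e_yz vu ev.
have [n' [e' [e'_adm le_e']]] := rotate_edge_competitor e_adm cE cu cy e_yz xz.
exists n', e'; split=> //; rewrite -(ltr_pM2r x_gt0).
exact: lt_le_trans x_gain le_e'.
Qed.

Theorem mainTheorem3 (m n : nat) (e : rel 'I_n) :
  (38 <= m)%N ->
  simple_graph e -> num_edges e = m -> no_isolated e -> H43_free e ->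
  (forall (n' : nat) (e' : rel 'I_n'),
      simple_graph e' -> num_edges e' = m -> no_isolated e' -> H43_free e' ->
      (spectral_radius e' <= spectral_radius e)%R) ->
  connected_graph e.
Proof.
case: n e => [|n] e _ e_simple e_m e_noiso e_free e_max; first by case.
move=> p q; apply/idPn => not_pq.
have [n' [e' [[e'_simple e'_m e'_noiso e'_free] lt_e']]] :=
  disconnected_not_extremal (And4 e_simple e_m e_noiso e_free) (fun conn => negP not_pq (conn p q)).
by move: (e_max n' e' e'_simple e'_m e'_noiso e'_free); rewrite leNgt lt_e'.
Qed.
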